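(* The log-linear model $\mathcal{L}(\widetilde\Phi_k\times\Psi:\ 1\le k\le n-1)$ of strictly positive $L_S$-decomposable distributions on $S_n$ has number of free parameters \[ c_n=\sum_{i=1}^n\left[\binom{n}{i}-1\right]=2^n-n-1. \]
   Context: $S_n$ is the group of permutations of $\{1,\ldots,n\}$. Product partition of the $n\times n$ board: $\mathcal{B}=\mathcal{R}\times\mathcal{C}=(R_i\times C_j)$ for partitions $\mathcal{R},\mathcal{C}$ of $\{1,\ldots,n\}$, with marginal $|\pi_{\mathcal{B}}|=(t_{ij})$, $t_{ij}=|\{s:(s,\pi(s))\in R_i\times C_j\}|$; $U^{\mathcal{B}}=\{v\in\mathbb{R}^{S_n}: |\pi_{\mathcal{B}}|=|\sigma_{\mathcal{B}}|\Rightarrow v(\pi)=v(\sigma)\}$. $\mathcal{L}(\mathcal{B}_1,\ldots,\mathcal{B}_m)$ is the set of strictly positive distributions $p$ on $S_n$ with $\log p\in U:=\mathrm{Span}(U^{\mathcal{B}_1},\ldots,U^{\mathcal{B}_m})$; its number of free parameters is $\dim U-1$. Thin sections $\widetilde\Phi_k=(\{1,\ldots,k\},\{k+1,\ldots,n\})$; full partition $\Psi=(\{1\},\ldots,\{n\})$. *)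

From HB Require Import structures.
From mathcomp Require Import all_boot all_order all_algebra all_fingroup.
Set Implicit Arguments. Unset Strict Implicit. Unset Printing Implicit Defensive.
Import GRing.Theory.
Local Open Scope ring_scope.

(* A partition of {0,...,n-1} into labelled blocks is given by a labelling
   function  f : 'I_n -> A  (block of s = label f s). *)

Definition marginal n (A B : finType) (fr : 'I_n -> A) (fc : 'I_n -> B)
  (p : 'S_n) (a : A) (b : B) : nat :=
  #|[set s : 'I_n | (fr s == a) && (fc (p s) == b)]|.

Definition same_marginal n (A B : finType) (fr : 'I_n -> A) (fc : 'I_n -> B)
  (p q : 'S_n) : bool :=
  [forall a : A, forall b : B, marginal fr fc p a b == marginal fr fc q a b].

Definition evdiff (R : fieldType) n (p q : 'S_n) :
  'Hom({ffun 'S_n -> R^o}, R^o) :=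
  linfun (fun v : {ffun 'S_n -> R^o} => v p - v q).

Definition UB (R : fieldType) n (A B : finType) (fr : 'I_n -> A)
  (fc : 'I_n -> B) : {vspace {ffun 'S_n -> R^o}} :=
  (\bigcap_(pq : 'S_n * 'S_n | same_marginal fr fc pq.1 pq.2)
      lker (evdiff R pq.1 pq.2))%VS.

(* thin section Phi~_k = ({1..k},{k+1..n}); 0-based: label s < k *)
Definition thin n (k : nat) : 'I_n -> bool := fun s => (s < k)%N.
Definition fullp n : 'I_n -> 'I_n := id.

Definition U_thin (R : fieldType) n : {vspace {ffun 'S_n -> R^o}} :=
  (\sum_(1 <= k < n) UB R (@thin n k) (@fullp n))%VS.

Definition free_params (R : fieldType) n := (\dim (U_thin R n) - 1)%N.

From HB Require Import structures.
From mathcomp Require Import all_boot all_order all_algebra all_fingroup.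
Set Implicit Arguments. Unset Strict Implicit. Unset Printing Implicit Defensive.
Import GRing.Theory.

(* Write I_k = {0, ..., k-1} and p[k] = p(I_k), so that
   p[0] ⊂ p[1] ⊂ ... ⊂ p[n] is the flag of subsets attached to p.  The
   marginal of p for Phi~_k x Psi records exactly the set p[k], and every
   k-subset of 'I_n is some p[k]; hence U^{Phi~_k x Psi} consists of the
   functions p |-> c(p[k]) with c a function on subsets.  Consequently
   U = Span_k U^{Phi~_k x Psi} is the image of the linear "flag sum"
     Phi : R^{subsets} -> R^{S_n},   Phi(c)(p) = sum_{k=0}^{n} c(p[k])
   (the terms k = 0, n are constant, and constants lie in U when n >= 2).
   A function c lies in the kernel of Phi iff c(S) only depends on #|S| for
   #|S| < n and c(I_n) = -sum_{k<n} c(I_k): this is proved by comparing the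
   flag sums of q and of (k-1 k) q, which differ only at level k, and by
   conjugating arbitrary transpositions to adjacent ones.  So the kernel is
   n-dimensional, and rank-nullity gives dim U = 2^n - n (over any field R,
   not only over the reals). *)

Section Flags.

Variable n : nat.

Definition seg k : {set 'I_n} := [set s : 'I_n | (s < k)%N].

Definition flag (p : 'S_n) k : {set 'I_n} := p @: seg k.

Lemma card_seg k : (k <= n)%N -> #|seg k| = k.
Proof.
move=> le_kn; have -> : seg k = widen_ord le_kn @: [set: 'I_k].
  apply/setP=> s; rewrite inE; apply/idP/imsetP => [lt_sk|[i _ ->]].
    by exists (Ordinal lt_sk) => //; apply/val_inj.
  exact: (ltn_ord i).
by rewrite card_imset ?cardsT ?card_ord // => i j /(congr1 val) /= /val_inj.
Qed.

Lemma card_le_n (S : {set 'I_n}) : (#|S| <= n)%N.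
Proof. by rewrite (leq_trans (max_card _)) ?card_ord. Qed.

Lemma card_flag (p : 'S_n) k : (k <= n)%N -> #|flag p k| = k.
Proof. by move=> le_kn; rewrite card_imset ?card_seg //; exact: perm_inj. Qed.

Lemma mem_flag (p : 'S_n) k b : (b \in flag p k) = ((p^-1)%g b < k)%N.
Proof.
apply/imsetP/idP => [[x + ->]|lt_bk]; first by rewrite inE permK.
by exists ((p^-1)%g b); rewrite ?inE ?permKV.
Qed.

Definition seg_stable k (s : 'S_n) := forall x : 'I_n, (x < k)%N -> (s x < k)%N.

Lemma flag_stable k (s q : 'S_n) : seg_stable k s -> flag (s * q)%g k = flag q k.
Proof.
move=> stab_s; have seg_s : s @: seg k = seg k.
  apply/eqP; rewrite eqEcard card_imset ?leqnn ?andbT; last exact: perm_inj.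
  by apply/subsetP=> y /imsetP[x]; rewrite !inE => /stab_s lt_sk ->.
rewrite /flag -{2}seg_s -imset_comp; apply: eq_imset => x /=; exact: permM.
Qed.

Lemma seg_stable_mul k (s t : 'S_n) :
  seg_stable k s -> seg_stable k t -> seg_stable k (s * t)%g.
Proof. by move=> stab_s stab_t x /stab_s /stab_t; rewrite permM. Qed.

Lemma seg_stable_tperm k (x y : 'I_n) :
  (x < k)%N = (y < k)%N -> seg_stable k (tperm x y).
Proof. by move=> xy_k z; case: tpermP => [->|->|] //; rewrite xy_k // -xy_k. Qed.

Lemma flag1 k : flag 1 k = seg k.
Proof. by rewrite /flag (eq_imset _ (@perm1 _)) imset_id. Qed.

Lemma flag_trivial k (p : 'S_n) : (k == 0) || (k == n) -> flag p k = seg k.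
Proof.
move=> k_0n; rewrite -[p]mulg1 flag_stable ?flag1 // => x lt_xk.
by case/orP: k_0n => /eqP k_def; rewrite k_def in lt_xk *; rewrite ?ltn_ord.
Qed.

Definition seg_list (S : {set 'I_n}) := enum S ++ enum (~: S).

Lemma size_seg_list (S : {set 'I_n}) : size (seg_list S) = n.
Proof. by rewrite size_cat -!cardE cardsC card_ord. Qed.

Lemma uniq_seg_list (S : {set 'I_n}) : uniq (seg_list S).
Proof.
rewrite cat_uniq !enum_uniq /= andbT; apply/hasPn => x.
by rewrite !mem_enum inE => /negbTE ->.
Qed.

Lemma seg_list_inj (S : {set 'I_n}) : injective (fun i : 'I_n => nth i (seg_list S) i).
Proof.
move=> i j /=; rewrite (set_nth_default i j) ?size_seg_list // => /eqP.
by rewrite nth_uniq ?size_seg_list ?uniq_seg_list // => /eqP/val_inj.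
Qed.

Definition seg_perm (S : {set 'I_n}) : 'S_n := perm (@seg_list_inj S).

Lemma flag_seg_perm (S : {set 'I_n}) : flag (seg_perm S) #|S| = S.
Proof.
apply/eqP; rewrite eqEcard card_flag ?card_le_n // leqnn andbT.
apply/subsetP=> y /imsetP[x]; rewrite inE => lt_xS ->.
by rewrite permE /= nth_cat -cardE lt_xS -(mem_enum (mem S)) mem_nth // -cardE.
Qed.

Lemma marginal_thin k (p : 'S_n) a b :
  marginal (thin k) (@fullp n) p a b = ((b \in flag p k) == a).
Proof.
rewrite /marginal mem_flag.
have -> : [set s : 'I_n | (thin k s == a) && (fullp (p s) == b)] =
          if ((p^-1)%g b < k)%N == a then [set (p^-1)%g b] else set0.
  apply/setP=> s; rewrite /fullp /thin !inE.
  have -> : (p s == b) = (s == (p^-1)%g b).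
    by apply/eqP/eqP => [<-|->]; rewrite ?permK ?permKV.
  by case: ifP => k_b; rewrite ?inE;
    case: (eqVneq s ((p^-1)%g b)) => [->|_]; rewrite ?k_b ?andbF.
by case: ifP; rewrite ?cards1 ?cards0.
Qed.

Lemma same_marginal_thin k (p q : 'S_n) :
  same_marginal (thin k) (@fullp n) p q = (flag p k == flag q k).
Proof.
apply/forallP/eqP => [same|eq_pq a]; last first.
  by apply/forallP => b; rewrite !marginal_thin eq_pq.
apply/setP => b; have /forallP/(_ b) := same true.
by rewrite !marginal_thin !eqb_id => /eqP; case: (b \in _); case: (b \in _).
Qed.

End Flags.

Lemma sum_binomial_minus1 n :
  (\sum_(1 <= i < n.+1) ('C(n, i) - 1))%N = (2 ^ n - n - 1)%N.
Proof.
have sum_bin : (\sum_(0 <= i < n.+1) 'C(n, i))%N = (2 ^ n)%N.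
  by rewrite big_mkord -[2]/(1 + 1)%N expnDn; apply: eq_bigr => i _; rewrite !exp1n !muln1.
have sum_bin1 : (\sum_(1 <= i < n.+1) 'C(n, i))%N = (2 ^ n - 1)%N.
  by rewrite -sum_bin [in RHS]big_ltn // bin0 addKn.
have split_sum : (\sum_(1 <= i < n.+1) ('C(n, i) - 1) + \sum_(1 <= i < n.+1) 1)%N
                 = (\sum_(1 <= i < n.+1) 'C(n, i))%N.
  rewrite -big_split /= big_nat [RHS]big_nat; apply: eq_bigr => i /andP[_ le_in].
  by rewrite subnK // bin_gt0 -ltnS.
move: split_sum; rewrite sum_bin1 sum_nat_const_nat subn1 /= muln1 => split_sum.
by rewrite subnAC -split_sum addnK.
Qed.

Local Open Scope ring_scope.

Section LinearMaps.

Variable R : fieldType.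

Definition evdiff_fun n (p q : 'S_n) (v : {ffun 'S_n -> R^o}) : R^o := v p - v q.

Lemma evdiff_linear n (p q : 'S_n) : linear (evdiff_fun p q).
Proof. by move=> a u w; rewrite /evdiff_fun !ffunE scalerBr addrACA opprD. Qed.

HB.instance Definition _ n (p q : 'S_n) :=
  GRing.isLinear.Build R {ffun 'S_n -> R^o} R^o _ (evdiff_fun p q) (evdiff_linear p q).

Lemma evdiffE n (p q : 'S_n) v : evdiff R p q v = v p - v q.
Proof. by rewrite /evdiff (lfunE (evdiff_fun p q)). Qed.

Lemma UB_thinP n k (v : {ffun 'S_n -> R^o}) :
  reflect (forall p q : 'S_n, flag p k = flag q k -> v p = v q)
          (v \in UB R (@thin n k) (@fullp n)).
Proof.
rewrite memvE; apply: (iffP subv_bigcapP) => [inUB p q pq_k|vflag [p q] /=].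
  have := inUB (p, q); rewrite same_marginal_thin pq_k eqxx -memvE memv_ker evdiffE.
  by move=> /(_ isT) /eqP /subr0_eq.
by rewrite same_marginal_thin -memvE memv_ker evdiffE => /eqP/vflag ->; rewrite subrr.
Qed.

Definition flag_sum_fun n (c : {ffun {set 'I_n} -> R^o}) : {ffun 'S_n -> R^o} :=
  \sum_(k < n.+1) [ffun p => c (flag p k)].

Lemma flag_sum_linear n : linear (@flag_sum_fun n).
Proof.
move=> a u w; rewrite /flag_sum_fun scaler_sumr -big_split /=.
by apply: eq_bigr => k _; apply/ffunP => p; rewrite !ffunE.
Qed.

HB.instance Definition _ n :=
  GRing.isLinear.Build R _ _ _ (@flag_sum_fun n) (@flag_sum_linear n).

Definition flag_sum n := linfun (@flag_sum_fun n).

Lemma flag_sumE n (c : {ffun {set 'I_n} -> R^o}) p :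
  flag_sum n c p = \sum_(k < n.+1) c (flag p k).
Proof. by rewrite lfunE sum_ffunE; apply: eq_bigr => k _; rewrite ffunE. Qed.

Definition kernel_param_fun n (a : {ffun 'I_n -> R^o}) : {ffun {set 'I_n} -> R^o} :=
  [ffun S : {set 'I_n} => if #|S| == n then - \sum_(j < n) a j
                         else \sum_(j < n | val j == #|S|) a j].

Lemma kernel_param_linear n : linear (@kernel_param_fun n).
Proof.
move=> r u w; apply/ffunP => S; rewrite !ffunE; case: ifP => _.
  rewrite scalerN scaler_sumr -opprD -big_split; congr (- _).
  by apply: eq_bigr => j _; rewrite !ffunE.
by rewrite scaler_sumr -big_split; apply: eq_bigr => j _; rewrite !ffunE.
Qed.

HB.instance Definition _ n :=
  GRing.isLinear.Build R _ _ _ (@kernel_param_fun n) (@kernel_param_linear n).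

Definition kernel_param n := linfun (@kernel_param_fun n).

Lemma kernel_paramE n (a : {ffun 'I_n -> R^o}) (S : {set 'I_n}) :
  kernel_param n a S = if #|S| == n then - \sum_(j < n) a j
                   else \sum_(j < n | val j == #|S|) a j.
Proof. by rewrite lfunE ffunE. Qed.

Lemma kernel_param_lt n (a : {ffun 'I_n -> R^o}) (S : {set 'I_n}) (j : 'I_n) :
  #|S| = j -> kernel_param n a S = a j.
Proof.
move=> card_S; rewrite kernel_paramE card_S (ltn_eqF (ltn_ord j)).
by apply: big_pred1 => i /=; rewrite -val_eqE.
Qed.

Lemma kernel_param_inj n : lker (kernel_param n) == 0%VS.
Proof.
apply/lker0P => a b eq_ab; apply/ffunP => j.
have card_j : #|seg n j| = j by rewrite card_seg // ltnW.
by rewrite -(kernel_param_lt a card_j) -(kernel_param_lt b card_j) eq_ab.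
Qed.

End LinearMaps.

Section FlagSumKernel.

Variables (R : fieldType) (n : nat) (c : {ffun {set 'I_n} -> R^o}).
Hypothesis c_ker : c \in lker (flag_sum R n).

Lemma flag_sum_ker (p : 'S_n) : \sum_(k < n.+1) c (flag p k) = 0.
Proof. by move: c_ker; rewrite memv_ker => /eqP fc0; rewrite -flag_sumE fc0 ffunE. Qed.

(* An adjacent transposition (i i+1) acting on positions only changes the
   flag at level i+1, so c takes the same value there. *)
Lemma flag_ker_adjacent (i j : 'I_n) (q : 'S_n) : j = i.+1 :> nat ->
  c (flag (tperm i j * q)%g j) = c (flag q j).
Proof.
move=> j_def; have lt_jn1 : (j < n.+1)%N := ltnW (ltn_ord j).
have : \sum_(k < n.+1) (c (flag (tperm i j * q)%g k) - c (flag q k)) = 0.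
  by rewrite sumrB !flag_sum_ker subrr.
rewrite (bigD1 (Ordinal lt_jn1)) //= big1 ?addr0 => [/subr0_eq //|k k_neq_j].
rewrite flag_stable ?subrr //; apply: seg_stable_tperm.
have : j != k :> nat by apply: contra k_neq_j => /eqP e; apply/eqP/val_inj.
by rewrite [in RHS]ltn_neqAle => ->; rewrite j_def.
Qed.

(* A transposition exchanging x in I_k with y outside I_k is conjugate, by a
   permutation stabilizing I_k, to the adjacent transposition (k-1 k). *)
Lemma flag_ker_straddle k (x y : 'I_n) (q : 'S_n) :
  (0 < k)%N -> (k < n)%N -> (x < k)%N -> ~~ (y < k)%N ->
  c (flag (tperm x y * q)%g k) = c (flag q k).
Proof.
move=> k_gt0 lt_kn lt_xk ge_yk.
have lt_k1n : (k.-1 < n)%N by apply: leq_ltn_trans lt_kn; exact: leq_pred.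
pose i := Ordinal lt_k1n; pose j := Ordinal lt_kn.
have j_def : j = i.+1 :> nat by rewrite /= prednK.
have lt_ik : (i < k)%N by rewrite /= prednK.
have ge_jk : (j < k)%N = false by rewrite /= ltnn.
pose s := (tperm x i * tperm j y)%g.
have stab_s : seg_stable k s.
  by apply: seg_stable_mul; apply: seg_stable_tperm; rewrite ?lt_ik ?lt_xk ?ge_jk ?(negbTE ge_yk).
have stab_sV : seg_stable k (s^-1)%g.
  rewrite invMg !tpermV; apply: seg_stable_mul; apply: seg_stable_tperm;
  by rewrite ?lt_ik ?lt_xk ?ge_jk ?(negbTE ge_yk).
have x_neq_j : x != j by apply: contraTneq lt_xk => ->; rewrite ge_jk.
have j_neq_i : j != i by apply/eqP => ji; move: j_def; rewrite ji => /n_Sn.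
have x_neq_y : x != y by apply: contraTneq lt_xk => ->.
have s_i : s i = x by rewrite /s permM tpermR tpermD // eq_sym.
have s_j : s j = y by rewrite /s permM (tpermD x_neq_j) ?tpermL // eq_sym.
clearbody s.
have -> : tperm x y = (s^-1 * (tperm i j * s))%g by rewrite -conjgE tpermJ s_i s_j.
by rewrite -mulgA -(mulgA (tperm i j)) flag_stable // flag_ker_adjacent // flag_stable.
Qed.

Lemma flag_ker_tperm k (x y : 'I_n) (q : 'S_n) : (0 < k)%N -> (k < n)%N ->
  c (flag (tperm x y * q)%g k) = c (flag q k).
Proof.
move=> k_gt0 lt_kn; have [xy_k|] := eqVneq (x < k)%N (y < k)%N.
  by rewrite flag_stable //; apply: seg_stable_tperm.
case: (boolP (x < k)%N) => lt_xk; case: (boolP (y < k)%N) => lt_yk // _.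
  exact: flag_ker_straddle.
by rewrite tpermC; apply: flag_ker_straddle.
Qed.

Lemma flag_ker_const k (p : 'S_n) : (k < n)%N -> c (flag p k) = c (seg n k).
Proof.
move=> lt_kn; rewrite -(flag1 n k); case: (posnP k) => [->|k_gt0].
  by rewrite !flag_trivial.
have [ts -> _] := prod_tpermP p; elim: ts => [|t ts IH]; first by rewrite big_nil.
by rewrite big_cons flag_ker_tperm.
Qed.

End FlagSumKernel.

Lemma ker_flag_sum (R : fieldType) n : lker (flag_sum R n) = limg (kernel_param R n).
Proof.
apply/eqP; rewrite eqEsubv; apply/andP; split; apply/subvP => c; last first.
  case/memv_imgP => a _ ->; rewrite memv_ker; apply/eqP/ffunP => p.
  rewrite flag_sumE ffunE big_ord_recr /= kernel_paramE card_flag // eqxx.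
  by rewrite (eq_bigr (fun j => a j)) ?subrr // => j _; apply: kernel_param_lt; rewrite card_flag // ltnW.
move=> c_ker; pose a : {ffun 'I_n -> R^o} := [ffun j : 'I_n => c (seg n j)].
suff -> : c = kernel_param R n a by apply: memv_img; exact: memvf.
apply/ffunP => S; have le_Sn := card_le_n S.
case: (ltnP #|S| n) => [lt_Sn|ge_Sn].
  rewrite (kernel_param_lt a (j := Ordinal lt_Sn)) // ffunE /=.
  by rewrite -[in LHS](flag_seg_perm S) (flag_ker_const c_ker _ lt_Sn).
have card_S : #|S| = n by apply/eqP; rewrite eqn_leq le_Sn ge_Sn.
have S_full : S = seg n n.
  apply/eqP; rewrite eqEcard card_seg // card_S leqnn andbT.
  by apply/subsetP => x _; rewrite inE ltn_ord.
have := flag_sum_ker c_ker 1; rewrite big_ord_recr /= flag1 -S_full kernel_paramE card_S eqxx.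
move/eqP; rewrite addrC addr_eq0 => /eqP ->; congr (- _).
by apply: eq_bigr => j _; rewrite ffunE flag1.
Qed.

Section FlagSumImage.

Variables (R : fieldType) (n : nat).
Hypothesis n_ge2 : (2 <= n)%N.

(* Every level-k flag function lies in U; for k = 0, n it is constant and
   hence already in U^{Phi~_1 x Psi}. *)
Lemma flag_fun_in_U k (c : {ffun {set 'I_n} -> R^o}) : (k <= n)%N ->
  [ffun p : 'S_n => c (flag p k)] \in U_thin R n.
Proof.
move=> le_kn; have lt_1n : (1 < n)%N by [].
rewrite /U_thin big_geq_mkord.
have [k_0n|] := boolP ((k == 0)%N || (k == n)).
  apply: (sumv_sup (Ordinal lt_1n)) => //; rewrite -memvE; apply/UB_thinP => p q _.
  by rewrite !ffunE !flag_trivial.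
rewrite negb_or => /andP[k_neq0 k_neqn].
have lt_kn : (k < n)%N by rewrite ltn_neqAle k_neqn.
apply: (sumv_sup (Ordinal lt_kn)); first by rewrite /= lt0n.
by rewrite -memvE; apply/UB_thinP => p q eq_pq; rewrite !ffunE eq_pq.
Qed.

(* Conversely, a function of p[k] is the flag sum of the function of
   k-subsets S |-> v(seg_perm S). *)
Lemma UB_thin_sub_img k : (k <= n)%N ->
  (UB R (@thin n k) (@fullp n) <= limg (flag_sum R n))%VS.
Proof.
move=> le_kn; apply/subvP => v /UB_thinP v_flag.
pose c : {ffun {set 'I_n} -> R^o} := [ffun S : {set 'I_n} => if #|S| == k then v (seg_perm S) else 0].
suff -> : v = flag_sum R n c by apply: memv_img; exact: memvf.
apply/ffunP => p; rewrite flag_sumE (bigD1 (Ordinal (leq_ltn_trans le_kn (ltnSn n)))) //=.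
rewrite big1 ?addr0 => [|m m_neq_k]; last first.
  have le_mn : (m <= n)%N by rewrite -ltnS.
  by rewrite ffunE card_flag // ifN.
rewrite ffunE card_flag // eqxx; apply: v_flag.
by have := flag_seg_perm (flag p k); rewrite card_flag.
Qed.

Lemma img_flag_sum : limg (flag_sum R n) = U_thin R n.
Proof.
apply/eqP; rewrite eqEsubv; apply/andP; split.
  apply/subvP => _ /memv_imgP[c _ ->]; rewrite (_ : flag_sum R n c = flag_sum_fun c).
    by apply: rpred_sum => k _; apply: flag_fun_in_U; rewrite -ltnS.
  by rewrite lfunE.
rewrite /U_thin big_geq_mkord; apply/subv_sumP => k _.
by apply: UB_thin_sub_img; exact: ltnW.
Qed.

(* Rank-nullity for the flag sum. *)
Lemma dim_U_thin : \dim (U_thin R n) = (2 ^ n - n)%N.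
Proof.
rewrite -img_flag_sum; have := limg_ker_dim (flag_sum R n) fullv.
rewrite capfv ker_flag_sum (limg_dim_eq (f := kernel_param R n)); last first.
  by rewrite (eqP (kernel_param_inj R n)) capv0.
rewrite !dimvf /dim /= !muln1 card_ord -cardsT -powersetT card_powerset cardsT card_ord.
by move=> <-; rewrite addKn.
Qed.

End FlagSumImage.

Unset Implicit Arguments.

Theorem mainTheorem11 (R : realFieldType) (n : nat) (hn : (2 <= n)%N) :
  free_params R n = (\sum_(1 <= i < n.+1) ('C(n, i) - 1))%N /\
  (\sum_(1 <= i < n.+1) ('C(n, i) - 1))%N = (2 ^ n - n - 1)%N.
Proof.
split; last exact: sum_binomial_minus1.
by rewrite sum_binomial_minus1 /free_params dim_U_thin.
Qed.
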